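(* For finite-dimensional $\mathcal H_X,\mathcal H_Y,\mathcal H_A,\mathcal H_B$, the set $\mathrm{LOCC}^*$ of maps from $\mathbf L(\mathcal H_X\otimes\mathcal H_Y)$ to $\mathbf L(\mathcal H_A\otimes\mathcal H_B)$ coincides with the set $\mathrm{SEP}$ of bipartite separable operations.
   Context: A quantum instrument with classical input $i$ is a family $\{\mathcal A_{o|i}\}_o$ (finite index sets) of completely positive linear maps with $\sum_o\mathcal A_{o|i}$ trace preserving for each $i$. $\mathrm{LOCC}^*$ is the set of completely positive trace preserving (CPTP) maps of the form $\mathcal M=\sum_{i_A,i_B,o_A,o_B}p(i_A,i_B|o_A,o_B)\,\mathcal A_{o_A|i_A}\otimes\mathcal B_{o_B|i_B}$, where $\{\mathcal A_{o_A|i_A}\}_{o_A}$ are instruments $\mathbf L(\mathcal H_X)\to\mathbf L(\mathcal H_A)$, $\{\mathcal B_{o_B|i_B}\}_{o_B}$ are instruments $\mathbf L(\mathcal H_Y)\to\mathbf L(\mathcal H_B)$, and $p(i_A,i_B|o_A,o_B)\ge0$ with $\sum_{i_A,i_B}p(i_A,i_B|o_A,o_B)=1$ for all $o_A,o_B$. $\mathrm{SEP}$ is the set of CPTP maps of the form $\sum_{k=1}^L\mathcal E^A_k\otimes\mathcal E^B_k$ with completely positive maps $\mathcal E^A_k:\mathbf L(\mathcal H_X)\to\mathbf L(\mathcal H_A)$, $\mathcal E^B_k:\mathbf L(\mathcal H_Y)\to\mathbf L(\mathcal H_B)$ (equivalently, CPTP maps with Kraus operators of product form $E_k\otimes F_k$).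 *)

From HB Require Import structures.
From mathcomp Require Import all_boot all_order all_algebra.
From mathcomp Require Export mxtens.
Set Implicit Arguments.
Unset Strict Implicit.
Unset Printing Implicit Defensive.
Import Order.TTheory GRing.Theory Num.Theory.
Local Open Scope ring_scope.

Section Quantum.
Variable C : numClosedFieldType.

Definition psd (n : nat) (A : 'M[C]_n) : Prop :=
  forall v : 'cV[C]_n, 0 <= ((map_mx Num.conj v)^T *m A *m v) 0 0.

(* The bipartite space C^m (x) C^n is C^(m*n) with the Kronecker indexing of
   mxtens (index (i,k) |-> i*n + k). *)
Definition tensmap (x y a b : nat) (E : 'M[C]_x -> 'M[C]_a)
  (F : 'M[C]_y -> 'M[C]_b) (M : 'M[C]_(x * y)) : 'M[C]_(a * b) :=
  \sum_(i < x) \sum_(j < x) \sum_(k < y) \sum_(l < y)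
     M (mxtens_index (i, k)) (mxtens_index (j, l))
       *: (E (delta_mx i j) *t F (delta_mx k l)).

Definition CP (x a : nat) (E : 'M[C]_x -> 'M[C]_a) : Prop :=
  linear E /\
  forall (k : nat) (M : 'M[C]_(k * x)),
    psd M -> psd (tensmap (fun N : 'M[C]_k => N) E M).

Definition TP (x a : nat) (E : 'M[C]_x -> 'M[C]_a) : Prop :=
  forall M : 'M[C]_x, \tr (E M) = \tr M.

Definition CPTP (x a : nat) (E : 'M[C]_x -> 'M[C]_a) : Prop := CP E /\ TP E.

Definition instruments (x a nI nO : nat)
  (A : 'I_nI -> 'I_nO -> 'M[C]_x -> 'M[C]_a) : Prop :=
  (forall i o, CP (A i o)) /\
  (forall i, TP (fun M => \sum_(o < nO) A i o M)).

Definition LOCCstar (x y a b : nat) (M : 'M[C]_(x * y) -> 'M[C]_(a * b)) : Prop :=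
  CPTP M /\
  exists (nIA nOA nIB nOB : nat)
         (A : 'I_nIA -> 'I_nOA -> 'M[C]_x -> 'M[C]_a)
         (B : 'I_nIB -> 'I_nOB -> 'M[C]_y -> 'M[C]_b)
         (p : 'I_nIA -> 'I_nIB -> 'I_nOA -> 'I_nOB -> C),
    instruments A /\ instruments B /\
    (forall iA iB oA oB, 0 <= p iA iB oA oB) /\
    (forall oA oB, \sum_(iA < nIA) \sum_(iB < nIB) p iA iB oA oB = 1) /\
    (forall X : 'M[C]_(x * y),
       M X = \sum_(iA < nIA) \sum_(iB < nIB) \sum_(oA < nOA) \sum_(oB < nOB)
               p iA iB oA oB *: tensmap (A iA oA) (B iB oB) X).

Definition SEP (x y a b : nat) (M : 'M[C]_(x * y) -> 'M[C]_(a * b)) : Prop :=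
  CPTP M /\
  exists (L : nat) (EA : 'I_L -> 'M[C]_x -> 'M[C]_a)
         (EB : 'I_L -> 'M[C]_y -> 'M[C]_b),
    (forall k, CP (EA k)) /\ (forall k, CP (EB k)) /\
    (forall X : 'M[C]_(x * y), M X = \sum_(k < L) tensmap (EA k) (EB k) X).

End Quantum.

From mathcomp Require Import all_boot all_order all_algebra.
From mathcomp Require Import ring.
Set Implicit Arguments.
Unset Strict Implicit.
Unset Printing Implicit Defensive.
Import Order.TTheory GRing.Theory Num.Theory.
Local Open Scope ring_scope.

(* A LOCC* map is separable, each term p(iA,iB|oA,oB) A_{oA|iA} (x) B_{oB|iB}
   being a product of CP maps.  Conversely let M = sum_k EA_k (x) EB_k.  The
   coefficients t_ij = tr EA_k(e_ij) form a positive semidefinite matrix, so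
   lam tr X - 2 tr EA_k(X) is the trace of an explicit CP map as soon as
   lam >= 2 sum_ij |t_ij|; hence EA_k / mu completes to a trace preserving
   instrument when mu >= sum_ij |t_ij|, and likewise for EB_k.  The
   post-processing p may depend on the outcomes: it keeps the product outcome
   with some weight w_k and otherwise chooses an input under which the
   observed outcome has the zero operation.  Trace preservation of M bounds
   the product of Alice's and Bob's sums sum_ij |t_ij|, which gives w_k <= 1
   once every input is repeated R times. *)

Section BigSums.
Variable V : nmodType.

Lemma big_mxtens_index m n (F : 'I_(m * n) -> V) :
  \sum_(p < m * n) F p = \sum_(i < m) \sum_(j < n) F (mxtens_index (i, j)).
Proof.
rewrite (pair_big (fun _ => true) (fun _ => true)
  (fun i j => F (mxtens_index (i, j)))) /=.
rewrite (reindex (@mxtens_unindex m n)) /=.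
  by apply: eq_bigr => k _; rewrite mxtens_unindexK.
by exists (@mxtens_index m n) => k _; rewrite (mxtens_indexK, mxtens_unindexK).
Qed.

Lemma big_only1 (T : finType) (i : T) (F : T -> V) :
  (forall k, k != i -> F k = 0) -> \sum_k F k = F i.
Proof. by move=> h; rewrite (bigD1 i) //= big1 ?addr0 // => k /h. Qed.

Lemma big_only2 (T : finType) (i j : T) (F : T -> V) : i != j ->
  (forall k, k != i -> k != j -> F k = 0) -> \sum_k F k = F i + F j.
Proof.
move=> nij h; rewrite (bigD1 i) //= (bigD1 j) /=; last by rewrite eq_sym.
by rewrite big1 ?addr0 // => k /andP [ki kj]; apply: h.
Qed.

Lemma sum_pair_mulrn_eq (I J : finType) (t : I * J) (F : I -> J -> V) :
  \sum_i \sum_j F i j *+ ((i, j) == t) = F t.1 t.2.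
Proof.
rewrite (pair_bigA _ (fun i j => F i j *+ ((i, j) == t))) /=.
rewrite (bigD1 t) //= big1 ?addr0; first by case: t => i j; rewrite eqxx.
by move=> [i j] /negbTE ->.
Qed.

Lemma sum_enum_val (T : finType) (F : T -> V) :
  \sum_(i < #|T|) F (enum_val i) = \sum_t F t.
Proof. by rewrite -big_enum_val. Qed.

Lemma exchange_big_pairs (I J K L : finType) (F : I -> J -> K -> L -> V) :
  \sum_i \sum_j \sum_k \sum_l F i j k l = \sum_k \sum_l \sum_i \sum_j F i j k l.
Proof.
under eq_bigr do rewrite exchange_big.
rewrite exchange_big; apply: eq_bigr => k _.
by under eq_bigr do rewrite exchange_big; rewrite exchange_big.
Qed.

End BigSums.

Arguments big_only1 {V T} i [F].

Section TensorProduct.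
Variable R : comPzRingType.

Lemma tensmxZl m n p q (c : R) (A : 'M[R]_(m, n)) (B : 'M[R]_(p, q)) :
  (c *: A) *t B = c *: (A *t B).
Proof. by apply/matrixP => i j; rewrite !mxE mulrA. Qed.

Lemma tensmxZr m n p q (c : R) (A : 'M[R]_(m, n)) (B : 'M[R]_(p, q)) :
  A *t (c *: B) = c *: (A *t B).
Proof. by apply/matrixP => i j; rewrite !mxE mulrCA. Qed.

Lemma tensmxDr m n p q (A : 'M[R]_(m, n)) (B B' : 'M[R]_(p, q)) :
  A *t (B + B') = A *t B + A *t B'.
Proof. by apply/matrixP => i j; rewrite !mxE mulrDr. Qed.

Lemma tensmx_sumr m n p q (I : finType) (A : 'M[R]_(m, n))
    (B : I -> 'M[R]_(p, q)) :
  A *t (\sum_r B r) = \sum_r A *t B r.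
Proof.
apply/matrixP => i j; rewrite !mxE summxE mulr_sumr summxE.
by apply: eq_bigr => r _; rewrite !mxE.
Qed.

Lemma mxtrace_tens m n (A : 'M[R]_m) (B : 'M[R]_n) :
  \tr (A *t B) = \tr A * \tr B.
Proof. by rewrite /mxtrace mulr_sum; apply: eq_bigr => i _; rewrite mxE. Qed.

Lemma mxtrace_delta n (i : 'I_n) : \tr (delta_mx i i : 'M[R]_n) = 1.
Proof.
rewrite /mxtrace (big_only1 i) ?mxE ?eqxx // => k ki.
by rewrite mxE (negbTE ki).
Qed.

Lemma tensmx_delta m n (i j : 'I_m) (p q : 'I_n) :
  delta_mx i j *t delta_mx p q =
  delta_mx (mxtens_index (i, p)) (mxtens_index (j, q)) :> 'M[R]_(m * n).
Proof.
have mI := inj_eq (can_inj (@mxtens_indexK m n)).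
apply/matrixP => P Q.
case: (mxtens_indexP P) => i1 p1; case: (mxtens_indexP Q) => j1 q1.
rewrite tensmxE !mxE !mI /= !xpair_eqE.
by case: (i1 == i); case: (j1 == j); case: (p1 == p); case: (q1 == q);
  rewrite /= ?mulr1 ?mulr0 ?mul0r.
Qed.

End TensorProduct.

Lemma inv1D_gt0 (R : numFieldType) (s : R) : 0 <= s -> 0 < (1 + s)^-1.
Proof. by move=> s_ge0; rewrite invr_gt0 (lt_le_trans ltr01) // lerDl. Qed.

Section Quantum.
Variable C : numClosedFieldType.
Implicit Types (c : C).

Section TensorMap.
Variables (x y a b : nat).
Implicit Types (E : 'M[C]_x -> 'M[C]_a) (F : 'M[C]_y -> 'M[C]_b).
Implicit Types (M : 'M[C]_(x * y)).

Lemma tensmapZl c E F M :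
  tensmap (fun X => c *: E X) F M = c *: tensmap E F M.
Proof.
rewrite /tensmap !scaler_sumr; apply: eq_bigr => i _; rewrite !scaler_sumr.
apply: eq_bigr => j _; rewrite !scaler_sumr; apply: eq_bigr => k _.
rewrite !scaler_sumr; apply: eq_bigr => l _.
by rewrite tensmxZl !scalerA mulrC.
Qed.

Lemma tensmapZr c E F M :
  tensmap E (fun X => c *: F X) M = c *: tensmap E F M.
Proof.
rewrite /tensmap !scaler_sumr; apply: eq_bigr => i _; rewrite !scaler_sumr.
apply: eq_bigr => j _; rewrite !scaler_sumr; apply: eq_bigr => k _.
rewrite !scaler_sumr; apply: eq_bigr => l _.
by rewrite tensmxZr !scalerA mulrC.
Qed.

Lemma tensmap0l F M : tensmap (fun _ : 'M[C]_x => (0 : 'M[C]_a)) F M = 0.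
Proof.
rewrite /tensmap big1 // => i _; rewrite big1 // => j _; rewrite big1 // => k _.
by rewrite big1 // => l _; rewrite tens0mx scaler0.
Qed.

Lemma tensmap0r E M : tensmap E (fun _ : 'M[C]_y => (0 : 'M[C]_b)) M = 0.
Proof.
rewrite /tensmap big1 // => i _; rewrite big1 // => j _; rewrite big1 // => k _.
by rewrite big1 // => l _; rewrite tensmx0 scaler0.
Qed.

Lemma tensmap_sumr (I : finType) E (F : I -> 'M[C]_y -> 'M[C]_b) M :
  tensmap E (fun X => \sum_r F r X) M = \sum_r tensmap E (F r) M.
Proof.
rewrite /tensmap; symmetry; rewrite exchange_big; apply: eq_bigr => i _.
rewrite exchange_big; apply: eq_bigr => j _.
rewrite exchange_big; apply: eq_bigr => k _.
rewrite exchange_big; apply: eq_bigr => l _.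
by rewrite tensmx_sumr scaler_sumr.
Qed.

Lemma tensmapDr E F F' M :
  tensmap E (fun X => F X + F' X) M = tensmap E F M + tensmap E F' M.
Proof.
rewrite /tensmap -!big_split; apply: eq_bigr => i _.
rewrite -!big_split; apply: eq_bigr => j _.
rewrite -!big_split; apply: eq_bigr => k _.
rewrite -!big_split; apply: eq_bigr => l _.
by rewrite tensmxDr scalerDr.
Qed.

Lemma tensmap_delta E F i j :
  tensmap E F (delta_mx (mxtens_index (i, j)) (mxtens_index (i, j))) =
  E (delta_mx i i) *t F (delta_mx j j).
Proof.
have mI := inj_eq (can_inj (@mxtens_indexK x y)).
rewrite /tensmap (big_only1 i); last first.
  move=> i' ni; rewrite big1 // => j' _; rewrite big1 // => k _.
  by rewrite big1 // => l _; rewrite mxE !mI /= xpair_eqE (negbTE ni) scale0r.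
rewrite (big_only1 i); last first.
  move=> i' ni; rewrite big1 // => k _; rewrite big1 // => l _.
  by rewrite mxE !mI /= !xpair_eqE (negbTE ni) andbF scale0r.
rewrite (big_only1 j); last first.
  move=> k nk; rewrite big1 // => l _.
  by rewrite mxE !mI /= !xpair_eqE (negbTE nk) andbF scale0r.
rewrite (big_only1 j); last first.
  by move=> l nl; rewrite mxE !mI /= !xpair_eqE (negbTE nl) !andbF scale0r.
by rewrite mxE !eqxx scale1r.
Qed.

End TensorMap.

Definition qform n (v : 'cV[C]_n) (A : 'M[C]_n) : C :=
  ((map_mx Num.conj v)^T *m A *m v) 0 0.

Lemma qformE n (v : 'cV[C]_n) A :
  qform v A = \sum_p \sum_q (v p 0)^* * A p q * v q 0.
Proof.
rewrite /qform mxE exchange_big; apply: eq_bigr => q _; rewrite mxE mulr_suml.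
by apply: eq_bigr => p _; rewrite !mxE.
Qed.

Lemma qformD n (v : 'cV[C]_n) A B : qform v (A + B) = qform v A + qform v B.
Proof. by rewrite /qform mulmxDr mulmxDl mxE. Qed.

Lemma qformZ n (v : 'cV[C]_n) c A : qform v (c *: A) = c * qform v A.
Proof. by rewrite /qform -scalemxAr -scalemxAl mxE. Qed.

Lemma qform0 n (v : 'cV[C]_n) : qform v 0 = 0.
Proof. by rewrite /qform mulmx0 mul0mx mxE. Qed.

Lemma qform_sum n (v : 'cV[C]_n) (I : finType) (A : I -> 'M[C]_n) :
  qform v (\sum_r A r) = \sum_r qform v (A r).
Proof. exact: (big_morph (qform v) (qformD v) (qform0 v)). Qed.

Lemma qform_delta n (v : 'cV[C]_n) i j :
  qform v (delta_mx i j) = (v i 0)^* * v j 0.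
Proof.
rewrite qformE (big_only1 i); last first.
  by move=> p np; apply: big1 => q _; rewrite mxE (negbTE np) mulr0 mul0r.
rewrite (big_only1 j); last by move=> q nq; rewrite mxE (negbTE nq) andbF mulr0 mul0r.
by rewrite mxE !eqxx mulr1.
Qed.

Lemma qform_tens m n (u : 'cV[C]_(m * n)) (M : 'M[C]_(m * n)) :
  qform u M = \sum_(i < m) \sum_(j < m) \sum_(k < n) \sum_(l < n)
    (u (mxtens_index (i, k)) 0)^* *
      M (mxtens_index (i, k)) (mxtens_index (j, l)) * u (mxtens_index (j, l)) 0.
Proof.
rewrite qformE big_mxtens_index; apply: eq_bigr => i _.
rewrite [RHS]exchange_big; apply: eq_bigr => k _.
by rewrite big_mxtens_index.
Qed.

Lemma bilin_delta_mx n (i j : 'I_n) (X : 'M[C]_n) :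
  (map_mx Num.conj (delta_mx i 0 : 'cV[C]_n))^T *m X *m delta_mx j 0 =
  (X i j)%:M.
Proof.
apply/matrixP => p q; rewrite [p]ord1 [q]ord1 (map_delta_mx Num.conj).
by rewrite trmx_delta -colE -(rowE i X) !mxE.
Qed.

Lemma qform_delta_col n (i : 'I_n) (X : 'M[C]_n) :
  qform (delta_mx i 0) X = X i i.
Proof. by rewrite /qform bilin_delta_mx mxE. Qed.

Lemma qform_delta_col2 n (i j : 'I_n) c (X : 'M[C]_n) :
  qform (delta_mx i 0 + c *: delta_mx j 0) X =
  X i i + c * X i j + c^* * X j i + c^* * c * X j j.
Proof.
rewrite /qform map_mxD map_mxZ /= [(_ + _)^T]linearD /= [(_ *: _)^T]linearZ /=.
rewrite !mulmxDl !mulmxDr -!scalemxAl -!scalemxAr !bilin_delta_mx !mxE /=.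
by rewrite !mulr1n mulrA addrA.
Qed.

Lemma psdD n (A B : 'M[C]_n) : psd A -> psd B -> psd (A + B).
Proof.
move=> hA hB v; rewrite -/(qform v (A + B)) qformD.
exact: addr_ge0 (hA v) (hB v).
Qed.

Lemma psdZ n c (A : 'M[C]_n) : 0 <= c -> psd A -> psd (c *: A).
Proof. by move=> hc hA v; rewrite -/(qform v _) qformZ mulr_ge0 //; apply: hA. Qed.

Lemma psd0 n : psd (0 : 'M[C]_n).
Proof. by move=> v; rewrite -/(qform v 0) qform0. Qed.

Lemma psd_sum n (I : finType) (A : I -> 'M[C]_n) :
  (forall r, psd (A r)) -> psd (\sum_r A r).
Proof. by move=> h; apply: big_ind => //; [apply: psd0 | apply: psdD]. Qed.

Lemma psd_mxtrace_ge0 n (N : 'M[C]_n) : psd N -> 0 <= \tr N.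
Proof.
by move=> h; apply: sumr_ge0 => P _; rewrite -qform_delta_col; apply: h.
Qed.

Lemma psd_rank1 n (u : 'cV[C]_n) : psd (u *m (map_mx Num.conj u)^T).
Proof.
move=> v; rewrite !mulmxA -(mulmxA _ _ v) mxE big_ord1.
set z := ((map_mx Num.conj v)^T *m u) 0 0.
suff -> : ((map_mx Num.conj u)^T *m v) 0 0 = z^* by apply: mul_conjC_ge0.
rewrite /z !mxE rmorph_sum; apply: eq_bigr => p _.
by rewrite !mxE rmorphM /= conjCK mulrC.
Qed.

Section LinearMap.
Variables (m n : nat) (E : 'M[C]_m -> 'M[C]_n).
Hypothesis linE : linear E.

Lemma lin0 : E 0 = 0.
Proof.
have := linE 1 0 0; rewrite !scale1r addr0.
by move=> /(congr1 (fun z => z - E 0)); rewrite subrr addrK => <-.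
Qed.

Lemma linZ c X : E (c *: X) = c *: E X.
Proof. by have := linE c X 0; rewrite !addr0 lin0 addr0. Qed.

Lemma linD X Y : E (X + Y) = E X + E Y.
Proof. by have := linE 1 X Y; rewrite !scale1r. Qed.

Lemma lin_sum (I : finType) (X : I -> 'M[C]_m) :
  E (\sum_r X r) = \sum_r E (X r).
Proof. exact: (big_morph E linD lin0). Qed.

End LinearMap.

Lemma CPZ x a c (E : 'M[C]_x -> 'M[C]_a) :
  0 <= c -> CP E -> CP (fun X => c *: E X).
Proof.
move=> hc [hl hp]; split.
  by move=> d u v /=; rewrite hl scalerDr !scalerA mulrC.
by move=> k M hM; rewrite tensmapZr; apply: psdZ => //; apply: hp.
Qed.

Lemma CPD x a (E F : 'M[C]_x -> 'M[C]_a) :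
  CP E -> CP F -> CP (fun X => E X + F X).
Proof.
move=> [hl hp] [hl' hp']; split.
  by move=> d u v /=; rewrite hl hl' scalerDr addrACA.
by move=> k M hM; rewrite tensmapDr; apply: psdD; [apply: hp | apply: hp'].
Qed.

Lemma CP0 x a : CP (fun _ : 'M[C]_x => (0 : 'M[C]_a)).
Proof.
split; first by move=> d u v; rewrite scaler0 addr0.
by move=> k M hM; rewrite tensmap0r; apply: psd0.
Qed.

Lemma CP_sum x a (I : finType) (E : I -> 'M[C]_x -> 'M[C]_a) :
  (forall r, CP (E r)) -> CP (fun X => \sum_r E r X).
Proof.
move=> h; split.
  move=> d u v /=; rewrite scaler_sumr -big_split; apply: eq_bigr => r _.
  by case: (h r) => hl _; rewrite hl.
move=> k M hM; rewrite tensmap_sumr; apply: psd_sum => r.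
by case: (h r) => _ hp; apply: hp.
Qed.

Section RankOneMap.
Variables (x a : nat) (w : 'cV[C]_x).

Definition rank1_map (X : 'M[C]_x) : 'M[C]_a.+1 :=
  qform w X *: delta_mx ord0 ord0.

Lemma CP_rank1_map : CP rank1_map.
Proof.
split; first by move=> d u v; rewrite /rank1_map qformD qformZ scalerDl scalerA.
move=> k M hM v; rewrite -/(qform v _).
set u : 'cV[C]_(k * x) := \col_P
  (v (mxtens_index ((mxtens_unindex P).1, ord0)) 0 * w (mxtens_unindex P).2 0).
suff -> : qform v (tensmap (fun N : 'M[C]_k => N) rank1_map M) = qform u M.
  exact: hM.
rewrite /tensmap [RHS]qform_tens.
rewrite qform_sum; apply: eq_bigr => i _; rewrite qform_sum; apply: eq_bigr => j _.
rewrite qform_sum; apply: eq_bigr => p _; rewrite qform_sum; apply: eq_bigr => q _.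
rewrite qformZ /rank1_map tensmxZr qformZ tensmx_delta !qform_delta.
by rewrite !mxE !mxtens_indexK /= rmorphM /=; ring.
Qed.

Lemma mxtrace_rank1_map X : \tr (rank1_map X) = qform w X.
Proof. by rewrite /rank1_map mxtraceZ mxtrace_delta mulr1. Qed.

End RankOneMap.

Section TraceCoefficients.
Variables (x a : nat) (E : 'M[C]_x -> 'M[C]_a).
Hypothesis cpE : CP E.

Definition trcoef i j := \tr (E (delta_mx i j)).

Lemma mxtrace_trcoef X : \tr (E X) = \sum_i \sum_j X i j * trcoef i j.
Proof.
case: cpE => linE _.
rewrite {1}(matrix_sum_delta X) lin_sum // raddf_sum; apply: eq_bigr => i _.
rewrite lin_sum // raddf_sum; apply: eq_bigr => j _.
by rewrite (linZ linE) /= mxtraceZ.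
Qed.

(* Complete positivity with a one-dimensional ancilla, applied to f f^*. *)
Lemma trcoef_form_ge0 (f : 'I_x -> C) :
  0 <= \sum_i \sum_j f i * (f j)^* * trcoef i j.
Proof.
case: cpE => _ posE.
set u : 'cV[C]_(1 * x) := \col_P f (mxtens_unindex P).2.
have := psd_mxtrace_ge0 (posE 1%N _ (psd_rank1 u)).
rewrite /tensmap raddf_sum big_ord1 raddf_sum big_ord1 raddf_sum.
congr (_ <= _); apply: eq_bigr => i _; rewrite raddf_sum; apply: eq_bigr => j _.
rewrite [LHS]/= mxtraceZ mxtrace_tens !mxE big_ord1 !mxE !mxtens_indexK /=.
by rewrite /mxtrace big_ord1 mxE eqxx mul1r.
Qed.

Lemma trcoef_diag_ge0 p : 0 <= trcoef p p.
Proof.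
have := trcoef_form_ge0 (fun k => if k == p then 1 else 0).
rewrite (big_only1 p); last first.
  by move=> k kp; rewrite (negbTE kp); apply: big1 => j _; rewrite !mul0r.
rewrite (big_only1 p); last by move=> k kp; rewrite (negbTE kp) rmorph0 mulr0 mul0r.
by rewrite eqxx rmorph1 !mul1r.
Qed.

Lemma trcoef_form2_ge0 (p q : 'I_x) (l c : C) : p != q ->
  0 <= l * l^* * trcoef p p + l * c^* * trcoef p q + c * l^* * trcoef q p
       + c * c^* * trcoef q q.
Proof.
move=> npq.
have := trcoef_form_ge0 (fun k => l *+ (k == p) + c *+ (k == q)).
have vanish k : k != p -> k != q -> l *+ (k == p) + c *+ (k == q) = 0.
  by move=> /negbTE -> /negbTE ->; rewrite addr0.
rewrite (big_only2 npq); last first.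
  by move=> k kp kq; rewrite (vanish k) //; apply: big1 => j _; rewrite !mul0r.
rewrite (big_only2 npq); last by move=> k kp kq; rewrite (vanish k) // rmorph0 mulr0 mul0r.
rewrite (big_only2 npq); last by move=> k kp kq; rewrite (vanish k) // rmorph0 mulr0 mul0r.
by rewrite !eqxx (negbTE npq) eq_sym (negbTE npq) !addr0 !add0r !addrA.
Qed.

Lemma trcoef_conj p q : trcoef q p = (trcoef p q)^*.
Proof.
have [->|npq] := eqVneq p q.
  by rewrite conj_Creal // ger0_real // trcoef_diag_ge0.
set al := trcoef p q; set be := trcoef q p.
have rp := ger0_real (trcoef_diag_ge0 p); have rq := ger0_real (trcoef_diag_ge0 q).
have /CrealP e1 := ger0_real (trcoef_form2_ge0 1 1 npq).
have /CrealP e2 := ger0_real (trcoef_form2_ge0 1 'i npq).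
move: e1 e2; rewrite !rmorphD !rmorphM /= !rmorph1 !conjCK !conjCi.
rewrite (conj_Creal rp) (conj_Creal rq) -/al -/be !mul1r !mulr1.
set tp := trcoef p p; set tq := trcoef q q => e1 e2.
have : (be - al^*) *+ 2 = 0.
  rewrite (_ : (be - al^*) *+ 2 =
    'i * ((tp + 'i * al^* + - 'i * be^* + - 'i * 'i * tq) -
          (tp + - 'i * al + 'i * be + 'i * - 'i * tq))
    - ((tp + al^* + be^* + tq) - (tp + al + be + tq))
    - ('i ^+ 2 + 1) * (al^* - be^* + al - be)); last by ring.
  by rewrite e2 e1 !subrr mulr0 sqrCi addNr mul0r !subr0.
by move/eqP; rewrite mulrn_eq0 /= subr_eq0 => /eqP.
Qed.

Lemma trcoef_norm_le p q : `|trcoef p q| *+ 2 <= trcoef p p + trcoef q q.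
Proof.
have [<-|npq] := eqVneq p q.
  by rewrite ger0_norm ?trcoef_diag_ge0 // mulr2n.
set t := trcoef p q; have [->|tn0] := eqVneq t 0.
  by rewrite normr0 mul0rn addr_ge0 ?trcoef_diag_ge0.
have nn0 : `|t| != 0 by rewrite normr_eq0.
have ct : t^* = `|t| ^+ 2 / t by rewrite normCK [t * _]mulrC mulfK.
have cn : (`|t|^-1)^* = `|t|^-1 by rewrite conj_Creal // rpredV normr_real.
have := trcoef_form2_ge0 1 (- t / `|t|) npq.
rewrite (trcoef_conj p q) -/t !rmorphM !rmorphN /= rmorph1 cn ct.
suff -> : 1 * 1 * trcoef p p + 1 * (- (`|t| ^+ 2 / t) / `|t|) * t
  + - t / `|t| * 1 * (`|t| ^+ 2 / t)
  + - t / `|t| * (- (`|t| ^+ 2 / t) / `|t|) * trcoef q q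
  = trcoef p p + trcoef q q - `|t| *+ 2 by rewrite subr_ge0.
by field; rewrite ?tn0 ?nn0.
Qed.

End TraceCoefficients.

Definition trnorm x a (E : 'M[C]_x -> 'M[C]_a) : C :=
  \sum_i \sum_j `|trcoef E i j|.

Lemma trnorm_ge0 x a (E : 'M[C]_x -> 'M[C]_a) : 0 <= trnorm E.
Proof. by apply: sumr_ge0 => i _; apply: sumr_ge0. Qed.

Section TraceComplement.
Variables (x a : nat) (E : 'M[C]_x -> 'M[C]_a.+1).
Hypothesis cpE : CP E.
Local Notation t := (trcoef E).

Definition phase i j : C := if t i j == 0 then 0 else - t i j / `|t i j|.

(* A Gershgorin-type decomposition into positive rank-one terms:
   lam tr X - 2 tr E(X) = sum_i d_i X_ii + sum_ij |t_ij| <w_ij, X w_ij>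
   with d_i = lam - 2 sum_j |t_ij| and w_ij = e_i + phase i j e_j. *)
Definition trace_complement (lam : C) (X : 'M[C]_x) : 'M[C]_a.+1 :=
  \sum_i ((lam - (\sum_j `|t i j|) *+ 2) *: rank1_map a (delta_mx i 0) X) +
  \sum_i \sum_j
    (`|t i j| *: rank1_map a (delta_mx i 0 + phase i j *: delta_mx j 0) X).

Lemma CP_trace_complement lam : trnorm E *+ 2 <= lam -> CP (trace_complement lam).
Proof.
move=> hlam.
have d_ge0 i : 0 <= lam - (\sum_j `|t i j|) *+ 2.
  rewrite subr_ge0; apply: le_trans hlam; rewrite lerMn2r /=.
  rewrite [leRHS](bigD1 i) //= lerDl; apply: sumr_ge0 => k _.
  by apply: sumr_ge0 => j _.
apply: CPD; apply: CP_sum => i.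
  exact: CPZ (d_ge0 i) (CP_rank1_map _ _).
by apply: CP_sum => j; apply: CPZ (CP_rank1_map _ _).
Qed.

Lemma norm_trcoef_qform_phase i j (X : 'M[C]_x) :
  `|t i j| * qform (delta_mx i 0 + phase i j *: delta_mx j 0) X =
  `|t i j| * X i i + `|t i j| * X j j - t i j * X i j - t j i * X j i.
Proof.
rewrite qform_delta_col2 (trcoef_conj cpE i j) /phase.
have [->|tn0] := eqVneq (t i j) 0.
  by rewrite normr0 rmorph0 !mul0r !subr0 addr0.
have nn0 : `|t i j| != 0 by rewrite normr_eq0.
set u := t i j.
have ct : u^* = `|u| ^+ 2 / u by rewrite normCK [u * _]mulrC mulfK.
have cn : (`|u|^-1)^* = `|u|^-1 by rewrite conj_Creal // rpredV normr_real.
rewrite !rmorphM !rmorphN /= cn ct.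
by field; rewrite ?tn0 ?nn0.
Qed.

Lemma sum_norm_trcoef_qform_phase (X : 'M[C]_x) :
  \sum_i \sum_j `|t i j| * qform (delta_mx i 0 + phase i j *: delta_mx j 0) X =
  (\sum_i (\sum_j `|t i j|) * X i i) *+ 2 - \tr (E X) *+ 2.
Proof.
under eq_bigr do under eq_bigr do rewrite norm_trcoef_qform_phase.
under eq_bigr do rewrite !sumrB !big_split.
rewrite !sumrB !big_split /= (mxtrace_trcoef cpE).
set T := \sum_i \sum_j X i j * t i j.
have -> : \sum_i \sum_j `|t i j| * X i i = \sum_i (\sum_j `|t i j|) * X i i.
  by apply: eq_bigr => i _; rewrite mulr_suml.
have -> : \sum_i \sum_j `|t i j| * X j j = \sum_i (\sum_j `|t i j|) * X i i.
  rewrite exchange_big; apply: eq_bigr => i _; rewrite mulr_suml.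
  by apply: eq_bigr => j _; rewrite (trcoef_conj cpE j i) norm_conjC.
have -> : \sum_i \sum_j t i j * X i j = T.
  by apply: eq_bigr => i _; apply: eq_bigr => j _; rewrite mulrC.
have -> : \sum_i \sum_j t j i * X j i = T.
  by rewrite exchange_big; apply: eq_bigr => i _; apply: eq_bigr => j _; rewrite mulrC.
ring.
Qed.

Lemma mxtrace_trace_complement lam X :
  \tr (E X) *+ 2 + \tr (trace_complement lam X) = lam * \tr X.
Proof.
rewrite mxtraceD !raddf_sum /=.
under eq_bigr do rewrite mxtraceZ mxtrace_rank1_map qform_delta_col.
under [X in _ + (_ + X)]eq_bigr do rewrite raddf_sum /=.
under [X in _ + (_ + X)]eq_bigr do under eq_bigr do
  rewrite mxtraceZ mxtrace_rank1_map.
rewrite sum_norm_trcoef_qform_phase.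
under eq_bigr do rewrite mulrBl mulrnAl.
rewrite sumrB -mulr_sumr sumrMnl [in RHS]/mxtrace.
ring.
Qed.

End TraceComplement.

Section Bound.
Variables (x y a b : nat) (M : 'M[C]_(x * y) -> 'M[C]_(a * b)) (L : nat).
Variables (EA : 'I_L -> 'M[C]_x -> 'M[C]_a) (EB : 'I_L -> 'M[C]_y -> 'M[C]_b).
Hypotheses (tpM : TP M) (cpA : forall k, CP (EA k)) (cpB : forall k, CP (EB k)).
Hypothesis defM : forall X, M X = \sum_k tensmap (EA k) (EB k) X.

Lemma trcoef_diag_mul_le1 k i p : trcoef (EA k) i i * trcoef (EB k) p p <= 1.
Proof.
have := tpM (delta_mx (mxtens_index (i, p)) (mxtens_index (i, p))).
rewrite defM raddf_sum /= mxtrace_delta.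
under eq_bigr do rewrite tensmap_delta mxtrace_tens.
rewrite (bigD1 k) //= => <-; rewrite lerDl; apply: sumr_ge0 => k' _.
by apply: mulr_ge0; apply: trcoef_diag_ge0.
Qed.

Lemma trcoef_norm_mul_le1 k i j p q :
  `|trcoef (EA k) i j| * `|trcoef (EB k) p q| <= 1.
Proof.
have h1 := trcoef_norm_le (cpA k) i j; have h2 := trcoef_norm_le (cpB k) p q.
rewrite -(ler_pMn2r (isT : (0 < 4)%N)).
rewrite (_ : _ *+ 4 = (`|trcoef (EA k) i j| *+ 2) * (`|trcoef (EB k) p q| *+ 2));
  last by rewrite mulrnAl mulrnAr -mulrnA.
apply: le_trans (ler_pM _ _ h1 h2) _; rewrite ?mulrn_wge0 //.
rewrite mulrDl !mulrDr (_ : 1 *+ 4 = 1 + 1 + (1 + 1)); last by rewrite -!mulr2n -mulrnA.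
by apply: lerD; apply: lerD; apply: trcoef_diag_mul_le1.
Qed.

Lemma trnorm_mul_le k : trnorm (EA k) * trnorm (EB k) <= (y * y * x * x)%:R.
Proof.
rewrite mulr_suml.
apply: le_trans (_ : \sum_(i < x) \sum_(j < x) \sum_(p < y) \sum_(q < y) 1 <= _).
  apply: ler_sum => i _; rewrite mulr_suml; apply: ler_sum => j _.
  rewrite mulr_sumr; apply: ler_sum => p _; rewrite mulr_sumr; apply: ler_sum => q _.
  exact: trcoef_norm_mul_le1.
by rewrite !sumr_const !card_ord -!mulrnA !mulnA.
Qed.

End Bound.

Lemma LOCCstar_SEP x y a b (M : 'M[C]_(x * y) -> 'M[C]_(a * b)) :
  LOCCstar M -> SEP M.
Proof.
move=> [cptpM [nIA [nOA [nIB [nOB [A [B [p [[cpA _] [[cpB _] [p_ge0 [_ defM]]]]]]]]]]]].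
split => //.
pose dec (P : 'I_(nIA * nIB * nOA * nOB)) :=
  ((mxtens_unindex (mxtens_unindex (mxtens_unindex P).1).1).1,
   (mxtens_unindex (mxtens_unindex (mxtens_unindex P).1).1).2,
   (mxtens_unindex (mxtens_unindex P).1).2, (mxtens_unindex P).2).
exists (nIA * nIB * nOA * nOB)%N.
exists (fun P X => p (dec P).1.1.1 (dec P).1.1.2 (dec P).1.2 (dec P).2
                   *: A (dec P).1.1.1 (dec P).1.2 X).
exists (fun P => B (dec P).1.1.2 (dec P).2).
split; first by move=> P; apply: CPZ; [apply: p_ge0 | apply: cpA].
split => // X; rewrite defM !big_mxtens_index.
apply: eq_bigr => iA _; apply: eq_bigr => iB _.
apply: eq_bigr => oA _; apply: eq_bigr => oB _.
by rewrite tensmapZl /dec !mxtens_indexK.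
Qed.

Lemma LOCCstar_finType x y a b (M : 'M[C]_(x * y) -> 'M[C]_(a * b))
    (IA OA IB OB : finType)
    (A : IA -> OA -> 'M[C]_x -> 'M[C]_a) (B : IB -> OB -> 'M[C]_y -> 'M[C]_b)
    (p : IA -> IB -> OA -> OB -> C) :
  CPTP M -> (forall i o, CP (A i o)) -> (forall i, TP (fun X => \sum_o A i o X)) ->
  (forall i o, CP (B i o)) -> (forall i, TP (fun X => \sum_o B i o X)) ->
  (forall iA iB oA oB, 0 <= p iA iB oA oB) ->
  (forall oA oB, \sum_iA \sum_iB p iA iB oA oB = 1) ->
  (forall X, M X = \sum_iA \sum_iB \sum_oA \sum_oB
                     p iA iB oA oB *: tensmap (A iA oA) (B iB oB) X) ->
  LOCCstar M.
Proof.
move=> cptpM cpA tpA cpB tpB p_ge0 p_sum1 defM; split => //.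
exists #|IA|, #|OA|, #|IB|, #|OB|.
exists (fun i o => A (enum_val i) (enum_val o)).
exists (fun i o => B (enum_val i) (enum_val o)).
exists (fun iA iB oA oB => p (enum_val iA) (enum_val iB) (enum_val oA) (enum_val oB)).
split.
  split=> [i o|i X]; first exact: cpA.
  by rewrite -(tpA (enum_val i) X) -[in RHS]sum_enum_val.
split.
  split=> [i o|i X]; first exact: cpB.
  by rewrite -(tpB (enum_val i) X) -[in RHS]sum_enum_val.
split; first by move=> *; apply: p_ge0.
split.
  move=> oA oB; rewrite -(p_sum1 (enum_val oA) (enum_val oB)).
  rewrite -[in RHS]sum_enum_val; apply: eq_bigr => iA _.
  by rewrite -[in RHS]sum_enum_val.
move=> X; rewrite defM -[in LHS]sum_enum_val; apply: eq_bigr => iA _.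
rewrite -[in LHS]sum_enum_val; apply: eq_bigr => iB _.
rewrite -[in LHS]sum_enum_val; apply: eq_bigr => oA _.
by rewrite -[in LHS]sum_enum_val.
Qed.

Section Rescaling.
Variables (x a : nat) (E : 'M[C]_x -> 'M[C]_a.+1).
Hypothesis cpE : CP E.

Definition rescaled (mu : C) (X : 'M[C]_x) := mu^-1 *: E X.

Definition rescaled_complement (mu : C) (X : 'M[C]_x) :=
  (mu *+ 2)^-1 *: trace_complement E (mu *+ 2) X.

Lemma CP_rescaled mu : 0 < mu -> CP (rescaled mu).
Proof. by move=> mu_gt0; apply: CPZ cpE; rewrite invr_ge0 ltW. Qed.

Lemma CP_rescaled_complement mu : trnorm E <= mu -> CP (rescaled_complement mu).
Proof.
move=> le_mu; apply: CPZ.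
  by rewrite invr_ge0 mulrn_wge0 // (le_trans (trnorm_ge0 E)).
by apply: CP_trace_complement; rewrite lerMn2r.
Qed.

Lemma TP_rescaledD mu : mu != 0 ->
  TP (fun X => rescaled mu X + rescaled_complement mu X).
Proof.
move=> mu_neq0 X /=; rewrite /rescaled /rescaled_complement mxtraceD !mxtraceZ.
have := mxtrace_trace_complement cpE (mu *+ 2) X.
move: (\tr (E X)) (\tr (trace_complement _ _ X)) => e g h.
have -> : g = mu *+ 2 * \tr X - e *+ 2 by rewrite -h addrC addKr.
by field; rewrite mu_neq0.
Qed.

End Rescaling.

Section Instrument.
Variables (x a : nat).

Definition discard : 'M[C]_x -> 'M[C]_a.+1 := trace_complement (fun _ => 0) 1.

Lemma trnorm0 : trnorm (fun _ : 'M[C]_x => 0 : 'M[C]_a.+1) = 0.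
Proof.
by rewrite /trnorm big1 // => i _; rewrite big1 // => j _; rewrite /trcoef mxtrace0 normr0.
Qed.

Lemma CP_discard : CP discard.
Proof. by apply: CP_trace_complement; rewrite trnorm0 mul0rn ler01. Qed.

Lemma TP_discard : TP discard.
Proof.
move=> X; have := mxtrace_trace_complement (CP0 x a.+1) 1 X.
by rewrite mxtrace0 mul0rn add0r mul1r.
Qed.

Variables (J : finType) (F G : J -> 'M[C]_x -> 'M[C]_a.+1).

Definition instr (i o : J + bool) : 'M[C]_x -> 'M[C]_a.+1 :=
  match i with
  | inl j => if o == inl j then F j else if o == inr false then G j else fun _ => 0
  | inr c => if o == inr c then discard else fun _ => 0
  end.

Lemma CP_instr : (forall j, CP (F j)) -> (forall j, CP (G j)) ->
  forall i o, CP (instr i o).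
Proof.
move=> cpF cpG [j|c] o /=.
  by case: ifP => _; [apply: cpF | case: ifP => _; [apply: cpG | apply: CP0]].
by case: ifP => _; [apply: CP_discard | apply: CP0].
Qed.

Lemma TP_instr : (forall j, TP (fun X => F j X + G j X)) ->
  forall i, TP (fun X => \sum_o instr i o X).
Proof.
move=> tpFG [j|c] X /=.
  rewrite (big_only2 (i := inl j) (j := inr false)) //; last first.
    by move=> o /negbTE -> /negbTE ->.
  by rewrite !eqxx /= tpFG.
by rewrite (big_only1 (inr c)) ?eqxx ?TP_discard // => o /negbTE ->.
Qed.

Definition veto (o : J + bool) : J + bool := inr (o != inr true).

Lemma instr_veto o : instr (veto o) o = fun _ => 0.
Proof. by rewrite /veto; have [->|ne] := eqVneq o (inr true) => //=; rewrite (negbTE ne). Qed.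

End Instrument.

Section SeparableIsLOCC.
Variables (x y a b : nat) (M : 'M[C]_(x * y) -> 'M[C]_(a.+1 * b.+1)) (L : nat).
Variables (EA : 'I_L -> 'M[C]_x -> 'M[C]_a.+1) (EB : 'I_L -> 'M[C]_y -> 'M[C]_b.+1).
Hypotheses (cptpM : CPTP M) (cpA : forall k, CP (EA k)) (cpB : forall k, CP (EB k)).
Hypothesis defM : forall X, M X = \sum_k tensmap (EA k) (EB k) X.

(* Only the product trnorm (EA k) * trnorm (EB k) is bounded (by trace
   preservation of M); the summands (1 + _)^-1 keep scaleA k * scaleB k
   below that bound plus 3, while making both scales positive. *)
Definition scaleA k := trnorm (EA k) + (1 + trnorm (EB k))^-1.
Definition scaleB k := trnorm (EB k) + (1 + trnorm (EA k))^-1.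
Definition copies := (y * y * x * x + 3)%N.
Definition keep_weight k := scaleA k * scaleB k / copies%:R.

Lemma trnorm_le_scaleA k : trnorm (EA k) <= scaleA k.
Proof. by rewrite lerDl ltW // inv1D_gt0 // trnorm_ge0. Qed.

Lemma trnorm_le_scaleB k : trnorm (EB k) <= scaleB k.
Proof. by rewrite lerDl ltW // inv1D_gt0 // trnorm_ge0. Qed.

Lemma scaleA_gt0 k : 0 < scaleA k.
Proof. by rewrite ltr_wpDl ?trnorm_ge0 ?inv1D_gt0 ?trnorm_ge0. Qed.

Lemma scaleB_gt0 k : 0 < scaleB k.
Proof. by rewrite ltr_wpDl ?trnorm_ge0 ?inv1D_gt0 ?trnorm_ge0. Qed.

Lemma keep_weight_ge0 k : 0 <= keep_weight k.
Proof. by rewrite divr_ge0 ?ler0n // mulr_ge0 // ltW ?scaleA_gt0 ?scaleB_gt0. Qed.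

Lemma keep_weight_le1 k : keep_weight k <= 1.
Proof.
rewrite /keep_weight ler_pdivrMr ?mul1r; last by rewrite ltr0n /copies addn3.
set sA := trnorm (EA k); set sB := trnorm (EB k).
have sA_ge0 : 0 <= sA := trnorm_ge0 _; have sB_ge0 : 0 <= sB := trnorm_ge0 _.
have frac_le1 (s : C) : 0 <= s -> s * (1 + s)^-1 <= 1.
  by move=> s_ge0; rewrite ler_pdivrMr ?mul1r ?lerDr // (lt_le_trans ltr01) ?lerDl.
have inv_le1 (s : C) : 0 <= s -> (1 + s)^-1 <= 1.
  by move=> s_ge0; rewrite invf_le1 ?lerDl // (lt_le_trans ltr01) ?lerDl.
rewrite (_ : scaleA k * scaleB k = sA * sB + sA * (1 + sA)^-1 + sB * (1 + sB)^-1
   + (1 + sB)^-1 * (1 + sA)^-1); last by rewrite /scaleA /scaleB -/sA -/sB; ring.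
rewrite /copies natrD -!addrA (_ : 3%:R = 1 + (1 + 1)) //.
apply: lerD; first exact: trnorm_mul_le cptpM.2 cpA cpB defM k.
apply: lerD; first exact: frac_le1.
apply: lerD; first exact: frac_le1.
by rewrite mulr_ile1 ?inv_le1 // ltW // inv1D_gt0.
Qed.

Local Notation instrA := (instr
  (fun kr : 'I_L * 'I_copies => rescaled (EA kr.1) (scaleA kr.1))
  (fun kr => rescaled_complement (EA kr.1) (scaleA kr.1))).
Local Notation instrB := (instr
  (fun k : 'I_L => rescaled (EB k) (scaleB k))
  (fun k => rescaled_complement (EB k) (scaleB k))).

Definition keep (oA : 'I_L * 'I_copies + bool) (oB : 'I_L + bool) : C :=
  if (oA, oB) is (inl kr, inl k) then keep_weight k *+ (kr.1 == k) else 0.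

(* The inputs are chosen after the outcomes: with probability [keep oA oB]
   the outcomes themselves are fed back as inputs, otherwise Alice's input is
   [veto oA], under which her outcome oA has the zero operation. *)
Definition postproc iA iB oA oB : C :=
  keep oA oB *+ ((iA, iB) == (oA, oB)) +
  (1 - keep oA oB) *+ ((iA, iB) == (veto oA, inr true)).

Lemma keep_ge0 oA oB : 0 <= keep oA oB.
Proof. by case: oA oB => [kr|?] [k|?] //=; rewrite mulrn_wge0 ?keep_weight_ge0. Qed.

Lemma keep_le1 oA oB : keep oA oB <= 1.
Proof.
case: oA oB => [kr|?] [k|?]; rewrite /keep ?ler01 //.
by case: (kr.1 == k); rewrite ?mulr1n ?mulr0n ?keep_weight_le1 ?ler01.
Qed.

Lemma postproc_ge0 iA iB oA oB : 0 <= postproc iA iB oA oB.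
Proof. by rewrite addr_ge0 ?mulrn_wge0 ?keep_ge0 ?subr_ge0 ?keep_le1. Qed.

Lemma postproc_sum1 oA oB : \sum_iA \sum_iB postproc iA iB oA oB = 1.
Proof.
under eq_bigr do rewrite big_split; rewrite big_split /=.
by rewrite !sum_pair_mulrn_eq addrC subrK.
Qed.

Lemma postproc_tensmap oA oB X :
  \sum_iA \sum_iB postproc iA iB oA oB *: tensmap (instrA iA oA) (instrB iB oB) X =
  keep oA oB *: tensmap (instrA oA oA) (instrB oB oB) X.
Proof.
under eq_bigr do under eq_bigr do rewrite scalerDl -!scalerMnl.
under eq_bigr do rewrite big_split.
by rewrite big_split !sum_pair_mulrn_eq instr_veto tensmap0l scaler0 /= addr0.
Qed.

Lemma keep_weight_rescaled k X :
  (keep_weight k *: tensmap (rescaled (EA k) (scaleA k))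
                            (rescaled (EB k) (scaleB k)) X) *+ copies =
  tensmap (EA k) (EB k) X.
Proof.
have nA := lt0r_neq0 (scaleA_gt0 k); have nB := lt0r_neq0 (scaleB_gt0 k).
rewrite /rescaled tensmapZl tensmapZr !scalerA scalerMnl.
rewrite (_ : _ *+ copies = 1) ?scale1r // -mulr_natr /keep_weight.
by field; rewrite nA nB pnatr_eq0 /copies addn3.
Qed.

Lemma keep_tensmap_sum X :
  \sum_oA \sum_oB keep oA oB *: tensmap (instrA oA oA) (instrB oB oB) X =
  \sum_k tensmap (EA k) (EB k) X.
Proof.
rewrite big_sumType /= [X in _ + X]big1 ?addr0; last first.
  by move=> c _; apply: big1 => oB _; rewrite /keep /= scale0r.
under eq_bigr => kr _.
  rewrite big_sumType /= [X in _ + X]big1 ?addr0; last first.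
    by move=> c _; rewrite /keep /= scale0r.
  rewrite (big_only1 kr.1); last first.
    by move=> k; rewrite /keep /= eq_sym => /negbTE ->; rewrite scale0r.
  rewrite /keep /= !eqxx mulr1n.
  over.
rewrite -(pair_bigA _ (fun k (r : 'I_copies) => keep_weight k *:
  tensmap (rescaled (EA k) (scaleA k)) (rescaled (EB k) (scaleB k)) X)) /=.
by apply: eq_bigr => k _; rewrite -keep_weight_rescaled sumr_const card_ord.
Qed.

Lemma SEP_LOCCstar : LOCCstar M.
Proof.
apply: (LOCCstar_finType (A := instrA) (B := instrB) (p := postproc)) => //.
- apply: CP_instr => kr; first exact: (CP_rescaled (cpA kr.1) (scaleA_gt0 kr.1)).
  exact: (CP_rescaled_complement (trnorm_le_scaleA kr.1)).
- apply: TP_instr => kr.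
  exact: (TP_rescaledD (cpA kr.1) (lt0r_neq0 (scaleA_gt0 kr.1))).
- apply: CP_instr => k; first exact: (CP_rescaled (cpB k) (scaleB_gt0 k)).
  exact: (CP_rescaled_complement (trnorm_le_scaleB k)).
- apply: TP_instr => k.
  exact: (TP_rescaledD (cpB k) (lt0r_neq0 (scaleB_gt0 k))).
- exact: postproc_ge0.
- exact: postproc_sum1.
move=> X; rewrite defM -keep_tensmap_sum exchange_big_pairs.
by apply: eq_bigr => oA _; apply: eq_bigr => oB _; rewrite postproc_tensmap.
Qed.

End SeparableIsLOCC.

Lemma LOCCstar_dim0 x y a b (M : 'M[C]_(x * y) -> 'M[C]_(a * b)) :
  CPTP M -> (a * b = 0)%N -> LOCCstar M.
Proof.
move=> cptpM ab0; split => //.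
exists 0%N, 0%N, 0%N, 0%N.
exists (fun _ _ _ => 0), (fun _ _ _ => 0), (fun _ _ _ _ => 0).
do 2 (split; first by split; case).
do 2 (split; first by case).
by move=> X; apply/matrixP => i; have := ltn_ord i; rewrite {2}ab0.
Qed.

End Quantum.

Unset Implicit Arguments.
Set Strict Implicit.

Theorem mainTheorem13 (C : numClosedFieldType) (x y a b : nat)
  (M : 'M[C]_(x * y) -> 'M[C]_(a * b)) :
  LOCCstar M <-> SEP M.
Proof.
split; first exact: LOCCstar_SEP.
case: a M => [|a] M sepM; first exact: LOCCstar_dim0 sepM.1 _.
case: b M sepM => [|b] M sepM.
  by apply: LOCCstar_dim0 sepM.1 _; rewrite muln0.
case: sepM => cptpM [L [EA [EB [cpA [cpB defM]]]]].
exact: SEP_LOCCstar cptpM cpA cpB defM.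
Qed.
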